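(* Let $M$ be a matroid on a finite set $E$ with $r(M)>0$. If $M$ is a unique expansion matroid, then $M$ is a union minimal matroid.
   Context: For a matroid $M=(E,\mathcal{I})$: $\mathcal{I}(M)$ its independent sets, $\mathcal{B}(M)$ its bases, $r(M)$ the size of a base, $\cup\mathcal{B}(M)$ the union of all bases. For $r(M)>0$, $s(M)=\{A\in\mathcal{I}(M): |A|=r(M)-1\}$. $M$ is a unique expansion matroid if for every $B\in\mathcal{B}(M)$ and every $A\in s(M)$, whenever $e_1,e_2\in B$ satisfy $A\cup\{e_1\}\in\mathcal{B}(M)$ and $A\cup\{e_2\}\in\mathcal{B}(M)$, then $e_1=e_2$. $M$ is union minimal if for every matroid $M_1$ on $E$ with $\cup\mathcal{B}(M_1)=\cup\mathcal{B}(M)$ and $\mathcal{B}(M_1)\subseteq\mathcal{B}(M)$ we have $\mathcal{B}(M_1)=\mathcal{B}(M)$. *)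

From mathcomp Require Import all_boot.
Set Implicit Arguments. Unset Strict Implicit. Unset Printing Implicit Defensive.

Section Matroids.
Variable E : finType.

Definition is_matroid (I : {set {set E}}) : Prop :=
  [/\ set0 \in I,
      (forall A B : {set E}, B \in I -> A \subset B -> A \in I) &
      (forall A B : {set E}, A \in I -> B \in I -> #|A| < #|B| ->
         exists2 x, x \in B :\: A & x |: A \in I)].

Definition bases (I : {set {set E}}) : {set {set E}} :=
  [set B in I | [forall C in I, (B \subset C) ==> (C == B)]].

Definition mrank (I : {set {set E}}) : nat :=
  #|odflt set0 [pick B in bases I]|.

Definition sM (I : {set {set E}}) : {set {set E}} :=
  [set A in I | #|A| == (mrank I).-1].

Definition union_bases (I : {set {set E}}) : {set E} :=
  \bigcup_(B in bases I) B.

Definition unique_expansion (I : {set {set E}}) : Prop :=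
  forall B A : {set E}, B \in bases I -> A \in sM I ->
  forall e1 e2 : E, e1 \in B -> e2 \in B ->
    e1 |: A \in bases I -> e2 |: A \in bases I -> e1 = e2.

Definition union_minimal (I : {set {set E}}) : Prop :=
  forall I1 : {set {set E}}, is_matroid I1 ->
    union_bases I1 = union_bases I -> bases I1 \subset bases I ->
    bases I1 = bases I.

End Matroids.

(* Fix a base B1 of the smaller matroid I1 and show that every base B of I is
   a base of I1, by induction on |B \ B1|.  For x in B \ B1 put A = B - x; an
   exchange with B1 gives a base y + A of I closer to B1, so by induction
   A is independent in I1.  Since the two families of bases have the same
   union, x lies in a base B2 of I1, and augmenting A from B2 inside I1 yields
   a base e + A of I1.  Now e + A and x + A are both bases of I expanding A by
   elements of the base B2, so unique expansion forces e = x, i.e. B = x + A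
   is a base of I1. *)
From mathcomp Require Import all_boot.
Set Implicit Arguments. Unset Strict Implicit. Unset Printing Implicit Defensive.

Lemma card_setD_exchange (T : finType) (B B1 : {set T}) x y :
  x \in B :\: B1 -> y \in B1 -> #|(y |: (B :\ x)) :\: B1|.+1 = #|B :\: B1|.
Proof.
move=> xBB1 yB1; rewrite (cardsD1 x (B :\: B1)) xBB1 add1n; congr _.+1.
apply: eq_card => w; rewrite !inE.
case: (eqVneq w y) => [->|_] /=; first by rewrite yB1 andbF.
by case: (w \in B1); case: (w == x).
Qed.

Section BasesOfMatroid.
Variables (E : finType) (I : {set {set E}}).
Implicit Types (A B C : {set E}).

Lemma bases_indep B : B \in bases I -> B \in I.
Proof. by rewrite inE => /andP[]. Qed.

Lemma base_maximal B C : B \in bases I -> C \in I -> B \subset C -> C = B.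
Proof.
rewrite inE => /andP[_ /forallP maxB] IC sBC.
by apply/eqP; have := maxB C; rewrite IC sBC.
Qed.

Lemma union_bases_neq0 : 0 < mrank I -> union_bases I != set0.
Proof.
rewrite /mrank; case: pickP => [B0 bB0 | _]; last by rewrite cards0.
rewrite card_gt0 => /set0Pn[z zB0]; apply/set0Pn; exists z.
by apply/bigcupP; exists B0.
Qed.

Hypothesis matI : is_matroid I.

Lemma indep_subset A B : B \in I -> A \subset B -> A \in I.
Proof. by have [_ hered _] := matI; apply: hered. Qed.

Lemma card_indep_le_base B C : B \in bases I -> C \in I -> #|C| <= #|B|.
Proof.
move=> bB IC; rewrite leqNgt; apply/negP => ltBC.
have [_ _ augment] := matI.
have [x /setDP[_ xNB] IxB] := augment _ _ (bases_indep bB) IC ltBC.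
by move: xNB; rewrite -(base_maximal bB IxB (subsetUr _ _)) setU11.
Qed.

Lemma indep_card_base B A : B \in bases I -> A \in I -> #|A| = #|B| ->
  A \in bases I.
Proof.
move=> bB IA cardA; rewrite inE IA; apply/forallP => C; apply/implyP => IC.
apply/implyP => sAC; rewrite eq_sym eqEcard sAC cardA.
exact: card_indep_le_base.
Qed.

Lemma card_base B : B \in bases I -> #|B| = mrank I.
Proof.
move=> bB; rewrite /mrank; case: pickP => [B0 bB0 | /(_ B)]; last by rewrite bB.
by apply/eqP; rewrite eqn_leq !card_indep_le_base ?bases_indep.
Qed.

Lemma base_augment A B : A \in I -> #|A|.+1 = mrank I -> B \in bases I ->
  exists2 y, y \in B :\: A & y |: A \in bases I.
Proof.
move=> IA cardA bB; have [_ _ augment] := matI.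
have ltAB : #|A| < #|B| by rewrite (card_base bB) -cardA.
have [y yBA IyA] := augment _ _ IA (bases_indep bB) ltAB.
exists y => //; apply: (indep_card_base bB IyA).
by move: yBA => /setDP[_ yNA]; rewrite cardsU1 yNA add1n cardA (card_base bB).
Qed.

End BasesOfMatroid.

Section UniqueExpansionUnionMinimal.
Variables (E : finType) (I I1 : {set {set E}}).
Hypotheses (matI : is_matroid I) (matI1 : is_matroid I1).
Hypothesis uexpI : unique_expansion I.
Hypothesis union_I1 : union_bases I1 = union_bases I.
Hypothesis sub_bases : bases I1 \subset bases I.
Implicit Types (A B : {set E}).

Lemma mrank_sub B : B \in bases I1 -> mrank I1 = mrank I.
Proof.
move=> bB.
by rewrite -(card_base matI1 bB) (card_base matI (subsetP sub_bases _ bB)).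
Qed.

Lemma expansion_sub_base A x : A \in I1 -> #|A|.+1 = mrank I ->
  x |: A \in bases I -> x |: A \in bases I1.
Proof.
move=> I1A cardA bxA.
have [B2 bB2 xB2] : exists2 B2, B2 \in bases I1 & x \in B2.
  have : x \in union_bases I by apply/bigcupP; exists (x |: A); rewrite ?setU11.
  by rewrite -union_I1 => /bigcupP.
have rk1 : #|A|.+1 = mrank I1 by rewrite (mrank_sub bB2).
have [e /setDP[eB2 _] beA] := base_augment matI1 I1A rk1 bB2.
have sMA : A \in sM I.
  by rewrite inE (indep_subset matI (bases_indep bxA) (subsetUr _ _)) -cardA eqxx.
rewrite -(uexpI (subsetP sub_bases _ bB2) sMA eB2 xB2 _ bxA) //.
exact: subsetP sub_bases _ beA.
Qed.

Lemma base_in_sub_bases B1 B : B1 \in bases I1 -> B \in bases I ->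
  B \in bases I1.
Proof.
move=> bB1; move: {2}#|B :\: B1| (erefl #|B :\: B1|) => n.
elim: n B => [|n IHn] B cardBB1 bB.
  move/eqP: cardBB1; rewrite cards_eq0 setD_eq0 => sBB1.
  by rewrite -(base_maximal bB (bases_indep (subsetP sub_bases _ bB1)) sBB1).
have [x xBB1] : exists x, x \in B :\: B1 by apply/set0Pn; rewrite -card_gt0 cardBB1.
have xB : x \in B by move: xBB1 => /setDP[].
have IA : B :\ x \in I := indep_subset matI (bases_indep bB) (subD1set B x).
have cardA : #|B :\ x|.+1 = mrank I by rewrite -(card_base matI bB) (cardsD1 x B) xB.
have [y /setDP[yB1 _] byA] :=
  base_augment matI IA cardA (subsetP sub_bases _ bB1).
have byA1 : y |: (B :\ x) \in bases I1.
  by apply: IHn byA; apply/succn_inj; rewrite -cardBB1 card_setD_exchange.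
have I1A : B :\ x \in I1 :=
  indep_subset matI1 (bases_indep byA1) (subsetUr _ _).
by rewrite -(setD1K xB); apply: expansion_sub_base; rewrite ?setD1K.
Qed.

End UniqueExpansionUnionMinimal.

Theorem theorem10 (E : finType) (I : {set {set E}}) :
  is_matroid I -> 0 < mrank I -> unique_expansion I -> union_minimal I.
Proof.
move=> matI rkI uexpI I1 matI1 union_I1 sub_bases.
have [B1 bB1] : exists B1, B1 \in bases I1.
  move: (union_bases_neq0 rkI); rewrite -union_I1 => /set0Pn[z /bigcupP[B1 bB1 _]].
  by exists B1.
apply/eqP; rewrite eqEsubset sub_bases; apply/subsetP => B.
exact: base_in_sub_bases bB1.
Qed.
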